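(* Let $C_1$ and $C_2$ be subsets of a topological real vector space such that $\mathrm{ri}(C_1)\subseteq C_2\subseteq\mathrm{rc}(C_1)$. If $C_1$ is strictly convex, then $C_2$ is strictly convex.
   Context: Topological real vector spaces are not assumed Hausdorff. For a subset $S$, $\mathrm{Aff}(S)$ is its affine hull; $\mathrm{ri}(S)$, $\mathrm{rc}(S)$ are the interior and closure of $S$ in the subspace topology of $\mathrm{Aff}(S)$. $]x,y[=\{(1-t)x+ty: t\in[0,1]\}\setminus\{x,y\}$. A set $C$ is strictly convex if for any two distinct $x,y\in\mathrm{rc}(C)$, $]x,y[\subseteq\mathrm{ri}(C)$. *)

From HB Require Import structures.
From mathcomp Require Import all_boot all_order all_algebra.
From mathcomp Require Import all_classical all_reals all_analysis.
Set Implicit Arguments. Unset Strict Implicit. Unset Printing Implicit Defensive.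
Import Order.TTheory GRing.Theory Num.Theory.
Local Open Scope classical_set_scope.
Local Open Scope ring_scope.

(* E : a topological real vector space (topologicalLmodType over a realType);
   no Hausdorff (separation) assumption is made. *)

Definition Aff (R : realType) (E : topologicalLmodType R) (S : set E) : set E :=
  [set x | exists (n : nat) (w : 'I_n -> R) (p : 'I_n -> E),
     (forall i, S (p i)) /\ \sum_(i < n) w i = 1 /\ x = \sum_(i < n) w i *: p i].

(* Relative interior: interior of S in the subspace topology of Aff S. *)
Definition ri (R : realType) (E : topologicalLmodType R) (S : set E) : set E :=
  [set x | Aff S x /\ exists U : set E, open U /\ U x /\ U `&` Aff S `<=` S].

(* Relative closure: closure of S in the subspace topology of Aff S. *)
Definition rc (R : realType) (E : topologicalLmodType R) (S : set E) : set E :=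
  [set x | Aff S x /\ forall U : set E, open U -> U x -> (U `&` Aff S) `&` S !=set0].

Definition oseg (R : realType) (E : topologicalLmodType R) (x y : E) : set E :=
  [set z | (exists t : R, 0 <= t <= 1 /\ z = (1 - t) *: x + t *: y) /\ z <> x /\ z <> y].

Definition strictly_convex (R : realType) (E : topologicalLmodType R) (C : set E) : Prop :=
  forall x y : E, rc C x -> rc C y -> x <> y -> oseg x y `<=` ri C.

From mathcomp Require Import all_boot all_order all_algebra.
From mathcomp Require Import all_classical all_reals all_analysis.
Local Open Scope classical_set_scope.

(* Since C2 lies in rc C1, the affine hull of C2 is contained in that of C1,
   so rc C2 is contained in rc C1.  Conversely a relatively open neighbourhood
   in Aff C1 of a point of ri C1 restricts to one in Aff C2, so ri C1 is
   contained in ri C2.  Hence every open segment between two points of rc C2,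
   which lies in ri C1 by strict convexity of C1, also lies in ri C2. *)

Set Implicit Arguments.
Unset Strict Implicit.
Import GRing.Theory.

Section AffineHull.
Local Open Scope ring_scope.
Variables (R : realType) (E : topologicalLmodType R) (S : set E).

(* [Aff S] is [combination 1]; other total weights are needed to add
   combinations. *)
Definition combination (c : R) (x : E) := exists n (w : 'I_n -> R) (p : 'I_n -> E),
  (forall i, S (p i)) /\ \sum_(i < n) w i = c /\ x = \sum_(i < n) w i *: p i.

Lemma combinationD c d a b :
  combination c a -> combination d b -> combination (c + d) (a + b).
Proof.
move=> [n [w [p [Sp [sw ->]]]]] [m [w' [p' [Sp' [sw' ->]]]]].
pose glue T (f : 'I_n -> T) (g : 'I_m -> T) (k : 'I_(n + m)) :=
  match fintype.split k with inl i => f i | inr j => g j end.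
have glueL T f g (i : 'I_n) : glue T f g (lshift m i) = f i.
  by rewrite /glue (unsplitK (inl _ i)).
have glueR T f g (j : 'I_m) : glue T f g (rshift n j) = g j.
  by rewrite /glue (unsplitK (inr _ j)).
exists (n + m)%N, (glue _ w w'), (glue _ p p'); split.
  by move=> k; rewrite /glue; case: (fintype.split k).
rewrite !big_split_ord -sw -sw'.
split; congr (_ + _); apply: eq_bigr => i _; by rewrite ?glueL ?glueR.
Qed.

Lemma combinationZ k c a : combination c a -> combination (k * c) (k *: a).
Proof.
move=> [n [w [p [Sp [sw ->]]]]].
exists n, (fun i => k * w i), p; split => //; split; first by rewrite -mulr_sumr sw.
by rewrite scaler_sumr; apply: eq_bigr => i _; rewrite scalerA.
Qed.

Lemma combination_sum n (w : 'I_n -> R) (p : 'I_n -> E) :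
  (forall i, Aff S (p i)) ->
  combination (\sum_(i < n) w i) (\sum_(i < n) w i *: p i).
Proof.
elim: n w p => [|n IH] w p Ap.
  by rewrite !big_ord0; exists 0%N, w, p; rewrite !big_ord0; split => [[]|].
rewrite !big_ord_recr /=; apply: combinationD; first exact: IH.
by have := combinationZ (w ord_max) (Ap ord_max); rewrite mulr1.
Qed.

Lemma subset_Aff : S `<=` Aff S.
Proof.
move=> x Sx; exists 1%N, (fun _ => 1), (fun _ => x).
by rewrite !big_ord1 scale1r.
Qed.

Lemma Aff_sub_Aff (A : set E) : A `<=` Aff S -> Aff A `<=` Aff S.
Proof.
move=> AS x [n [w [p [Ap [sw ->]]]]].
by have := combination_sum w (fun i => AS _ (Ap i)); rewrite sw.
Qed.

End AffineHull.

Section RelativeTopology.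
Variables (R : realType) (E : topologicalLmodType R).

Lemma rc_sub_rc (A B : set E) : A `<=` rc B -> rc A `<=` rc B.
Proof.
move=> ArcB x [Ax near_A]; split.
  by apply: Aff_sub_Aff Ax => y /ArcB [].
move=> U oU Ux; have [z [[Uz _] /ArcB [_ near_B]]] := near_A U oU Ux.
exact: near_B.
Qed.

Lemma ri_sub_ri (A B : set E) : ri B `<=` A -> A `<=` Aff B -> ri B `<=` ri A.
Proof.
move=> riBA AB x riBx; split; first exact/subset_Aff/riBA.
have [_ [U [oU [Ux UB]]]] := riBx.
exists U; do 2!split => //.
move=> z [Uz /(Aff_sub_Aff AB) Bz]; apply: riBA; split => //.
by exists U.
Qed.

End RelativeTopology.

Theorem mainTheorem13 (R : realType) (E : topologicalLmodType R) (C1 C2 : set E) :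
  ri C1 `<=` C2 -> C2 `<=` rc C1 -> strictly_convex C1 -> strictly_convex C2.
Proof.
move=> riC1 C2rc sc x y /(rc_sub_rc C2rc) x1 /(rc_sub_rc C2rc) y1 xy z xyz.
have C2Aff : C2 `<=` Aff C1 by move=> w /C2rc [].
exact: (ri_sub_ri riC1 C2Aff) (sc x y x1 y1 xy z xyz).
Qed.
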